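(* Let $n$ be odd and suppose $q=18n^2+1$ is a prime power. Let $x$ be a primitive $(3n)$-th root of unity in $\mathbb F_q$, and let $Y=(y_0,y_1,\dots,y_{3n-1})$ be a complete system of representatives for the cosets of $C^{3n}$ in $\mathbb F_q^*$ such that $\sum_{i=0}^{3n-1}y_i=0$, $\sum_{i=0}^{3n-1}x^iy_i=0$ and $\sum_{i=0}^{3n-1}x^{-i}y_i=0$. Then there exists a $(9n^2,3n;4)$ Heffter net.
   Context: $C^{3n}$ denotes the subgroup of index $3n$ of $\mathbb F_q^*$ (the nonzero $3n$-th powers). A half-set of an abelian group $G$ of odd order $2v+1\ge7$ is a subset $V\subseteq G\setminus\{0\}$ containing exactly one element of each pair $\{g,-g\}$, $g\ne0$. A $(v,k)$ Heffter system on $V$ is a partition of $V$ into blocks of size $k$ each summing to $0$ in $G$. A $(k^2,k;r)$ Heffter net is a partial linear space (any two distinct points lie in at most one block) whose point set is a half-set $V$ of an abelian group of order $2k^2+1$, with a resolution of its blocks into $r$ parallel classes (each a partition of $V$), each of which is a $(k^2,k)$ Heffter system. *)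

From HB Require Import structures.
From mathcomp Require Import all_boot all_order all_algebra.
Set Implicit Arguments. Unset Strict Implicit. Unset Printing Implicit Defensive.
Import GRing.Theory.
Local Open Scope ring_scope.

Definition in_Cpow (F : finFieldType) (m : nat) (a : F) : bool :=
  [exists z : F, (z != 0) && (a == z ^+ m)].

Definition coset_reps (F : finFieldType) (m : nat) (y : 'I_m -> F) : Prop :=
  (forall i, y i != 0) /\
  (forall a : F, a != 0 -> exists! i : 'I_m, in_Cpow m (a / y i)).

Definition half_set (G : finZmodType) (V : {set G}) : Prop :=
  0 \notin V /\ forall g : G, g != 0 -> (g \in V) = (- g \notin V).

Definition heffter_system (G : finZmodType) (V : {set G}) (k : nat)
  (P : {set {set G}}) : Prop :=
  partition P V /\
  forall B, B \in P -> #|B| = k /\ \sum_(g in B) g = 0.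

(* A (k^2,k;r) Heffter net on G: a half-set V of G (|G| = 2k^2+1) and r
   parallel classes P_0..P_{r-1} (a resolution of the block multiset), each a
   (k^2,k) Heffter system on V, such that the blocks form a partial linear
   space: two distinct blocks (distinct as members of the resolution) share
   at most one point. *)
Definition heffter_net (G : finZmodType) (k r : nat) : Prop :=
  #|G| = (2 * k ^ 2).+1 /\
  exists (V : {set G}) (P : 'I_r -> {set {set G}}),
    half_set V /\
    (forall i, heffter_system V k (P i)) /\
    (forall (i j : 'I_r) (B B' : {set G}), B \in P i -> B' \in P j ->
        (i != j) || (B != B') -> #|B :&: B'| <= 1)%N.

(* Put m = 3n and index the points y_i x^j by Z/mZ x Z/mZ.  Since q - 1 = 2m^2,
   the m-th powers C^m are exactly the 2m-th roots of unity, i.e. +-<x>, and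
   -1 is not in <x> because m is odd; as the y_i represent the cosets of C^m,
   the points form a half-set.  The rows, columns, diagonals (j - i = c) and
   anti-diagonals (i + j = c) of the grid are four parallel classes, whose
   blocks sum to y_c S, x^c sum y_i, x^c sum x^i y_i and x^c sum x^-i y_i,
   where S = sum x^j = 0.  Two lines of different slopes meet in at most one
   point since 2 is invertible modulo the odd m. *)

From mathcomp Require Import all_boot all_order all_algebra.
From mathcomp Require Import fingroup cyclic finfield.
Set Implicit Arguments. Unset Strict Implicit. Unset Printing Implicit Defensive.
Import GRing.Theory.
Local Open Scope ring_scope.

Lemma mulr2n_eq0_odd (Z : finZmodType) (a : Z) :
  odd #|Z| -> (a *+ 2 == 0) = (a == 0).
Proof.
move=> Z_odd; apply/eqP/eqP => [a2|->]; last exact: mul0rn.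
have := expg_cardG (in_setT a); rewrite cardsT FinRing.zmodXgE.
by rewrite -(odd_double_half #|Z|) Z_odd -mul2n mulrnDr mulrnA a2 mul0rn addr0.
Qed.

Section Grid.
Variable Z : finZmodType.
Implicit Types (t : 'I_4) (c e : Z) (u : Z * Z).

Definition grid_label t u : Z :=
  match val t with 0 => u.1 | 1 => u.2 | 2 => u.2 - u.1 | _ => u.1 + u.2 end.

Definition grid_line t c e : Z * Z :=
  match val t with 0 => (c, e) | 1 => (e, c) | 2 => (e, e + c) | _ => (e, c - e) end.

Lemma grid_lineK t c e : grid_label t (grid_line t c e) = c.
Proof.
rewrite /grid_label /grid_line; case: t => [[|[|[|[|?]]]] ?] //=.
  by rewrite (addrC e) addrK.
by rewrite (addrC e) subrK.
Qed.

Lemma grid_line_inj t c : injective (grid_line t c).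
Proof. by rewrite /grid_line; case: t => [[|[|[|[|?]]]] ?] e e' //= []. Qed.

Lemma grid_fibreE t c : [set u | grid_label t u == c] = grid_line t c @: setT.
Proof.
apply/setP => u; rewrite inE; apply/eqP/imsetP => [<- | [e _ ->]]; last exact: grid_lineK.
rewrite /grid_label /grid_line; case: u => a b.
case: t => [[|[|[|[|//]]]] _] /=; [exists b | exists a | exists a | exists a] => //.
  by rewrite addrC subrK.
by rewrite addrC addKr.
Qed.

Lemma grid_labels_inj t t' u v : odd #|Z| -> t != t' ->
  grid_label t u = grid_label t v -> grid_label t' u = grid_label t' v -> u = v.
Proof.
move=> Z_odd; wlog lt_tt' : t t' / (val t < val t')%N => [hwlog neq_tt' | _].
  case: (ltngtP t t') => [lt | lt | /val_inj eq_tt'] e e'.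
  - exact: hwlog lt neq_tt' e e'.
  - by apply: hwlog lt _ e' e; rewrite eq_sym.
  - by rewrite eq_tt' eqxx in neq_tt'.
case: u v => [a b] [a' b']; rewrite /grid_label /=.
case: t lt_tt' => [[|[|[|[|//]]]] ?]; case: t' => [[|[|[|[|//]]]] ?] //= _ e e'.
- by rewrite e e'.
- by rewrite -e in e' *; move/addIr: e' ->.
- by rewrite -e in e' *; move/addrI: e' ->.
- by rewrite -e in e' *; move/addrI/oppr_inj: e' ->.
- by rewrite -e in e' *; move/addIr: e' ->.
have a_eq : a = a'.
  apply/eqP; rewrite -subr_eq0 -mulr2n_eq0_odd //; apply/eqP.
  have double c d : c *+ 2 = (c + d) - (d - c).
    by rewrite opprB addrACA subrr addr0 mulr2n.
  by rewrite mulrnBl (double a b) (double a' b') e e' subrr.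
by rewrite -a_eq in e *; move/addIr: e ->.
Qed.

End Grid.

Section GridNet.
Variables (Z G : finZmodType) (p : Z * Z -> G).
Hypothesis p_inj : injective p.
Implicit Types (t : 'I_4) (c : Z).

Definition grid_block t c : {set G} := p @: [set u | grid_label t u == c].

Definition grid_class t : {set {set G}} := [set grid_block t c | c : Z].

Lemma card_grid_block t c : #|grid_block t c| = #|Z|.
Proof.
by rewrite card_imset // grid_fibreE card_imset ?cardsT //; apply: grid_line_inj.
Qed.

Lemma grid_block_sum t c : \sum_(g in grid_block t c) g = \sum_e p (grid_line t c e).
Proof.
rewrite big_imset /=; last by move=> u v _ _ /p_inj.
rewrite grid_fibreE big_imset /=; last by move=> e e' _ _ /grid_line_inj.
by apply: eq_bigl => e; rewrite inE.
Qed.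

Lemma grid_class_partition t : partition (grid_class t) (p @: setT).
Proof.
have -> : p @: setT = cover (grid_class t).
  apply/setP => g; apply/imsetP/bigcupP => [[u _ ->] | [_ /imsetP [c _ ->]]].
    by exists (grid_block t (grid_label t u)); apply: imset_f; rewrite ?inE.
  by case/imsetP=> u _ ->; exists u.
apply: (proj1 (indexed_partition _ _)) => [c c' _ _ neq_cc' | c _].
  rewrite imset_disjoint //; apply/pred0P => u /=; rewrite !inE.
  by apply/negbTE; apply: contraNN neq_cc' => /andP [/eqP <- /eqP <-].
apply/set0Pn; exists (p (grid_line t c 0)).
by apply: imset_f; rewrite inE grid_lineK.
Qed.

Lemma grid_blocks_meet t t' c c' : odd #|Z| -> (t != t') || (c != c') ->
  (#|grid_block t c :&: grid_block t' c'| <= 1)%N.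
Proof.
move=> Z_odd neq; rewrite -imsetI; last by move=> u v _ _ /p_inj.
apply: leq_trans (leq_imset_card _ _) _; apply/card_le1_eqP => u v.
rewrite !inE => /andP [/eqP u_c /eqP u_c'] /andP [/eqP v_c /eqP v_c'].
have [eq_tt' | neq_tt'] := eqVneq t t'.
  by move: neq; rewrite eq_tt' eqxx -u_c -u_c' eq_tt' eqxx.
by apply: (grid_labels_inj Z_odd neq_tt'); rewrite ?u_c ?v_c ?u_c' ?v_c'.
Qed.

Lemma grid_heffter_net : odd #|Z| -> #|G| = (2 * #|Z| ^ 2).+1 ->
  half_set (p @: setT) -> (forall t c, \sum_e p (grid_line t c e) = 0) ->
  heffter_net G #|Z| 4.
Proof.
move=> Z_odd cardG halfV line_sum; split=> //; exists (p @: setT), grid_class.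
split=> //; split=> [t | t t' _ _ /imsetP [c _ ->] /imsetP [c' _ ->] neq].
  split; first exact: grid_class_partition.
  by move=> _ /imsetP [c _ ->]; rewrite card_grid_block grid_block_sum line_sum.
apply: grid_blocks_meet => //; have [eq_tt' | //] := eqVneq t t'.
by move: neq; rewrite eq_tt' eqxx /=; apply: contra => /eqP ->.
Qed.

End GridNet.

Lemma oppr1_neq1_odd (R : finNzRingType) : odd #|R| -> (-1 : R) != 1.
Proof.
by move=> R_odd; rewrite -subr_eq0 -opprD oppr_eq0 -mulr2n mulr2n_eq0_odd ?oner_eq0.
Qed.

Lemma prim_root_neq0 (R : idomainType) (n : nat) (z : R) :
  n.-primitive_root z -> z != 0.
Proof.
move=> z_prim; apply/eqP => z0; move: (prim_expr_order z_prim).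
rewrite z0 expr0n gtn_eqF ?(prim_order_gt0 z_prim) //.
by apply/eqP; rewrite eq_sym oner_eq0.
Qed.

Lemma expf_card_pred (F : finFieldType) (a : F) : a != 0 -> a ^+ #|F|.-1 = 1.
Proof.
move=> a_nz; apply: (mulfI a_nz).
by rewrite -exprS (ltn_predK (finNzRing_gt1 F)) expf_card mulr1.
Qed.

Lemma finField_prim_root (F : finFieldType) :
  exists g : F, (#|F|.-1).-primitive_root g.
Proof.
have : has (#|F|.-1).-primitive_root (enum (predC1 (0 : F))).
  apply: has_prim_root; last by rewrite -cardE cardC1.
  - by rewrite -ltnS (ltn_predK (finNzRing_gt1 F)) finNzRing_gt1.
  - by apply/allP => a; rewrite mem_enum inE unity_rootE => /expf_card_pred ->.
  - exact: enum_uniq.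
by case/hasP => g _ g_prim; exists g.
Qed.

Lemma in_CpowE (F : finFieldType) (m : nat) (a : F) :
  (m %| #|F|.-1)%N -> a != 0 ->
  in_Cpow m a = (a ^+ (#|F|.-1 %/ m) == 1).
Proof.
move=> /divnK q_eq a_nz; set d := (#|F|.-1 %/ m)%N in q_eq *.
apply/existsP/eqP => [[z /andP [z_nz /eqP ->]] | a_pow].
  by rewrite -exprM mulnC q_eq expf_card_pred.
have [g g_prim] := finField_prim_root F.
have [[k _] /= a_eq] := prim_rootP g_prim (expf_card_pred a_nz).
have d_gt0 : (0 < d)%N.
  move: (finNzRing_gt1 F); rewrite -(ltn_predK (finNzRing_gt1 F)) ltnS -q_eq.
  by rewrite muln_gt0 => /andP [].
move/eqP: a_pow; rewrite a_eq -exprM -(prim_order_dvd g_prim) -q_eq mulnC.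
rewrite dvdn_pmul2r // => /dvdnP [l ->].
by exists (g ^+ l); rewrite exprM eqxx expf_neq0 ?(prim_root_neq0 g_prim).
Qed.

Lemma sum_prim_root_expr (R : idomainType) (n : nat) (z : R) :
  (1 < n)%N -> n.-primitive_root z -> \sum_(i < n) z ^+ i = 0.
Proof.
move=> n_gt1 z_prim; have z_neq1 : z - 1 != 0.
  by rewrite subr_eq0 -[z]expr1 -(prim_order_dvd z_prim) dvdn1 gtn_eqF.
by apply: (mulfI z_neq1); rewrite -subrX1 (prim_expr_order z_prim) subrr mulr0.
Qed.

Section HeffterPoints.
Variables (F : finFieldType) (m : nat) (x : F) (y : 'I_m -> F).
Hypotheses (m_odd : odd m) (cardF : #|F| = (2 * m ^ 2).+1).
Hypotheses (x_prim : m.-primitive_root x) (y_reps : coset_reps y).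

Lemma in_Cpow_sign (a : F) :
  a != 0 -> in_Cpow m a = (a ^+ m == 1) || (a ^+ m == -1).
Proof.
have m_gt0 : (0 < m)%N by rewrite (prim_order_gt0 x_prim).
move=> a_nz; rewrite in_CpowE ?cardF //= ?dvdn_mull ?dvdn_exp //.
by rewrite mulnC -mulnA mulKn // -sqrf_eq1 -exprM mulnC.
Qed.

Lemma in_Cpow_expr j : in_Cpow m (x ^+ j).
Proof.
rewrite in_Cpow_sign ?expf_neq0 ?(prim_root_neq0 x_prim) //.
by rewrite exprAC (prim_expr_order x_prim) expr1n eqxx.
Qed.

Lemma coset_index_unique (a : F) i i' : a != 0 ->
  in_Cpow m (a / y i) -> in_Cpow m (a / y i') -> i = i'.
Proof.
move=> a_nz a_i a_i'; have [? [_ uniq_i]] := y_reps.2 a a_nz.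
by rewrite -(uniq_i i a_i) -(uniq_i i' a_i').
Qed.

Definition heffter_point (u : 'I_m * 'I_m) : F := y u.1 * x ^+ u.2.

Lemma heffter_point_neq0 u : heffter_point u != 0.
Proof. by rewrite mulf_neq0 ?expf_neq0 ?(prim_root_neq0 x_prim) ?y_reps.1. Qed.

Lemma heffter_pointKl u : heffter_point u / y u.1 = x ^+ u.2.
Proof. by rewrite mulrC mulKf ?y_reps.1. Qed.

Lemma heffter_point_inj : injective heffter_point.
Proof.
move=> [i j] [i' j'] eq_pt.
have eq_i : i = i'.
  apply: (coset_index_unique (heffter_point_neq0 (i, j))).
    by rewrite heffter_pointKl in_Cpow_expr.
  by rewrite eq_pt heffter_pointKl in_Cpow_expr.
move: eq_pt; rewrite /heffter_point -eq_i /= => /(mulfI (y_reps.1 i)) /eqP.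
by rewrite (eq_prim_root_expr x_prim) !modn_small // => /eqP/val_inj ->.
Qed.

Lemma mem_heffter_points (a : F) i : a != 0 -> in_Cpow m (a / y i) ->
  (a \in heffter_point @: setT) = ((a / y i) ^+ m == 1).
Proof.
move=> a_nz a_i; apply/imsetP/eqP => [[u _ a_eq] | /(prim_rootP x_prim) [j a_j]].
  have -> : i = u.1.
    apply: (coset_index_unique a_nz a_i).
    by rewrite a_eq heffter_pointKl in_Cpow_expr.
  by rewrite a_eq heffter_pointKl exprAC (prim_expr_order x_prim) expr1n.
by exists (i, j); rewrite // /heffter_point /= -a_j mulrC divfK ?y_reps.1.
Qed.

Lemma half_set_heffter_points : half_set (heffter_point @: setT).
Proof.
split; first by apply/imsetP => [[u _ /esym/eqP]]; apply/negP; apply: heffter_point_neq0.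
move=> a a_nz; have [i [a_i _]] := y_reps.2 a a_nz.
have b_nz : a / y i != 0 by rewrite mulf_neq0 ?invr_eq0 ?y_reps.1.
have oppX b : (- b) ^+ m = - b ^+ m by rewrite exprNn -signr_odd m_odd mulN1r.
have na_i : in_Cpow m (- a / y i).
  rewrite mulNr in_Cpow_sign ?oppr_eq0 // oppX !eqr_oppLR opprK orbC.
  by rewrite -in_Cpow_sign.
rewrite (mem_heffter_points a_nz a_i) (mem_heffter_points _ na_i) ?oppr_eq0 //.
have /negbTE neq1 : (-1 : F) != 1 by rewrite oppr1_neq1_odd // cardF /= mul2n odd_double.
move: a_i; rewrite mulNr oppX eqr_oppLR in_Cpow_sign //.
by case/orP => /eqP ->; rewrite eqxx ?neq1 // eq_sym neq1.
Qed.

End HeffterPoints.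

Lemma heffter_point_line_sum (F : finFieldType) (k : nat) (x : F)
    (y : 'I_k.+1 -> F) :
  (0 < k)%N -> k.+1.-primitive_root x ->
  \sum_(i < k.+1) y i = 0 -> \sum_(i < k.+1) x ^+ i * y i = 0 ->
  \sum_(i < k.+1) x ^- i * y i = 0 ->
  forall t c, \sum_e heffter_point x y (grid_line t c e) = 0.
Proof.
move=> k_gt0 x_prim sum_y sum_xy sum_xVy t c; have xk := prim_expr_order x_prim.
rewrite /heffter_point /grid_line; case: t => [[|[|[|[|//]]]] _] /=.
- by rewrite -mulr_sumr sum_prim_root_expr ?mulr0.
- by rewrite -mulr_suml sum_y mul0r.
- under eq_bigr do rewrite expr_mod // exprD mulrA [y _ * _]mulrC.
  by rewrite -mulr_suml sum_xy mul0r.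
- have x_unit : x \is a GRing.unit by rewrite unitfE (prim_root_neq0 x_prim).
  under eq_bigr => e _.
    rewrite expr_mod // exprD expr_mod // exprB ?(ltnW (ltn_ord e)) // xk div1r.
    by rewrite mulrCA mulrC [y e * _]mulrC; over.
  by rewrite -mulr_suml sum_xVy mul0r.
Qed.

Lemma heffter_net_of_coset_reps (F : finFieldType) (k : nat) (x : F)
    (y : 'I_k.+1 -> F) :
  (0 < k)%N -> odd k.+1 -> #|F| = (2 * k.+1 ^ 2).+1 ->
  k.+1.-primitive_root x -> coset_reps y ->
  \sum_(i < k.+1) y i = 0 -> \sum_(i < k.+1) x ^+ i * y i = 0 ->
  \sum_(i < k.+1) x ^- i * y i = 0 ->
  heffter_net F k.+1 4.
Proof.
move=> k_gt0 m_odd cardF x_prim y_reps sum_y sum_xy sum_xVy.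
rewrite -(card_ord k.+1).
apply: (grid_heffter_net (heffter_point_inj cardF x_prim y_reps)); rewrite ?card_ord //.
- exact: half_set_heffter_points.
- exact: heffter_point_line_sum.
Qed.

Theorem theorem5p1 (n : nat) (F : finFieldType) (x : F)
  (y : 'I_(3 * n) -> F) :
  odd n ->
  #|F| = (18 * n ^ 2).+1 ->
  (3 * n)%N.-primitive_root x ->
  coset_reps y ->
  \sum_(i < 3 * n) y i = 0 ->
  \sum_(i < 3 * n) x ^+ i * y i = 0 ->
  \sum_(i < 3 * n) x ^- i * y i = 0 ->
  exists G : finZmodType, heffter_net G (3 * n) 4.
Proof.
move=> n_odd cardF; have n_gt0 : (0 < n)%N by rewrite lt0n; apply: contraTneq n_odd => ->.
have m_odd : odd (3 * n) by rewrite oddM.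
have cardF' : #|F| = (2 * (3 * n) ^ 2).+1 by rewrite cardF expnMn mulnA.
have [k m_eq] : exists k, (3 * n)%N = k.+1 by exists (3 * n).-1; rewrite prednK ?muln_gt0.
(* Only an index type of the form 'I_k.+1 carries the group structure of Z/mZ. *)
move: y m_odd cardF'; rewrite m_eq => y m_odd cardF' x_prim y_reps sum_y sum_xy sum_xVy.
exists F.
apply: heffter_net_of_coset_reps m_odd cardF' x_prim y_reps sum_y sum_xy sum_xVy.
by rewrite -ltnS -m_eq (leq_trans _ (leq_pmulr 3 n_gt0)).
Qed.
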